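(* For DCG models: (a) if a DCG model $(G^*,\mathbb{P})$ satisfies the causal faithfulness condition (CFC), then it satisfies the weak SMR assumption; (b) there exists a DCG model $(G,\mathbb{P})$ satisfying the CFC that does not satisfy the identifiable SMR assumption; (c) if a DCG model $(G^*,\mathbb{P})$ satisfies the identifiable SMR assumption, then it satisfies the P-minimality assumption; (d) there exists a DCG model $(G,\mathbb{P})$ satisfying the weak SMR assumption that does not satisfy the P-minimality assumption.
   Context: A DCG is a directed graph $G=(V,E)$ on $V=\{1,\dots,p\}$, directed cycles allowed. A DCG model is a pair $(G,\mathbb{P})$ with $\mathbb{P}$ a probability distribution of a random vector $(X_1,\dots,X_p)$. Descendant/ancestor refer to directed paths. $j,k$ are really adjacent if $j\to k$ or $k\to j$, virtually adjacent if they have a common child $\ell$ that is an ancestor of $j$ or $k$; the skeleton $S(G)$ is the set of really or virtually adjacent pairs, and $|S(G)|$ its cardinality. d-connection: for $S\subset V\setminus\{j,k\}$, $j$ is d-connected to $k$ given $S$ if some undirected path between them has every interior vertex in $S$ a collider ($\to b\leftarrow$ on the path) and every collider with itself or a descendant in $S$; otherwise d-separated. $D_{sep}(G)$ is the set of triples $(j,k,S)$ with $j$ d-separated from $k$ given $S$. $(G,\mathbb{P})$ satisfies the causal Markov condition (CMC) if whenever $j$ is d-separated from $k$ given $S$ in $G$, $X_j\perp X_k\mid X_S$ under $\mathbb{P}$. Two DCGs are Markov equivalent if every distribution satisfying the CMC with respect to one satisfies it with respect to the other; $\mathcal{M}(G)$ is the Markov equivalence class of $G$. CFC: for all $j,k$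 and $S\subset V\setminus\{j,k\}$, $j$ is d-separated from $k$ given $S$ in $G^*$ iff $X_j\perp X_k\mid X_S$ under $\mathbb{P}$. Identifiable SMR: $(G^*,\mathbb{P})$ satisfies the CMC and $|S(G^* )|<|S(G)|$ for every DCG $G$ with $(G,\mathbb{P})$ satisfying the CMC and $G\notin\mathcal{M}(G^* )$. Weak SMR: same with $\le$ instead of $<$. P-minimality: $(G^*,\mathbb{P})$ satisfies the CMC and there is no DCG $G$ with $(G,\mathbb{P})$ satisfying the CMC, $G\notin\mathcal{M}(G^* )$, and $D_{sep}(G^* )\subsetneq D_{sep}(G)$. *)

From HB Require Import structures.
From mathcomp Require Import all_boot all_order all_algebra.
From mathcomp Require Import all_classical all_reals all_analysis.

Set Implicit Arguments.
Unset Strict Implicit.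
Unset Printing Implicit Defensive.
Import Order.TTheory GRing.Theory Num.Theory.

Local Open Scope classical_set_scope.
Local Open Scope ring_scope.

(* A directed graph on V = {1,...,p}, encoded as 'I_p, given by its edge set
   E : {set 'I_p * 'I_p}; (j,k) \in E means j -> k.  Directed cycles are
   allowed; a DCG has no self-loops. *)
Definition is_dcg (p : nat) (E : {set 'I_p * 'I_p}) : Prop :=
  forall v : 'I_p, (v, v) \notin E.

Definition edge (p : nat) (E : {set 'I_p * 'I_p}) : rel 'I_p :=
  fun x y => (x, y) \in E.

Definition ancestor (p : nat) (E : {set 'I_p * 'I_p}) (a b : 'I_p) : bool :=
  connect (edge E) a b.

Definition really_adjacent (p : nat) (E : {set 'I_p * 'I_p}) (j k : 'I_p) : bool :=
  ((j, k) \in E) || ((k, j) \in E).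

Definition virtually_adjacent (p : nat) (E : {set 'I_p * 'I_p}) (j k : 'I_p)
  : bool :=
  [exists l : 'I_p, [&& (j, l) \in E, (k, l) \in E &
                        ancestor E l j || ancestor E l k]].

(* skeleton: unordered pairs {j,k}, j <> k, encoded as (j,k) with j < k *)
Definition skeleton (p : nat) (E : {set 'I_p * 'I_p}) : {set 'I_p * 'I_p} :=
  [set jk : 'I_p * 'I_p | (jk.1 < jk.2)%N &&
     (really_adjacent E jk.1 jk.2 || virtually_adjacent E jk.1 jk.2)].

Definition skel_card (p : nat) (E : {set 'I_p * 'I_p}) : nat := #|skeleton E|.

(* An undirected path between j and k: distinct vertices w_0 = j, ..., w_n = k
   together with orientations o_0 ... o_{n-1}; o_i = true means the i-th edge
   is w_i -> w_{i+1}, o_i = false means w_i <- w_{i+1}. *)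
Definition is_path (p : nat) (E : {set 'I_p * 'I_p}) (j k : 'I_p)
  (w : seq 'I_p) (o : seq bool) : Prop :=
  [/\ size w = (size o).+1, nth j w 0 = j, nth j w (size o) = k, uniq w &
      forall i, (i < size o)%N ->
        if nth false o i then (nth j w i, nth j w i.+1) \in E
        else (nth j w i.+1, nth j w i) \in E].

(* interior vertex i (0 < i < n) is a collider: w_{i-1} -> w_i <- w_{i+1} *)
Definition collider_at (o : seq bool) (i : nat) : bool :=
  nth false o i.-1 && ~~ nth false o i.

Definition d_connected (p : nat) (E : {set 'I_p * 'I_p}) (j k : 'I_p)
  (S : {set 'I_p}) : Prop :=
  exists (w : seq 'I_p) (o : seq bool), is_path E j k w o /\
    forall i, (0 < i)%N -> (i < size o)%N ->
      (nth j w i \in S -> collider_at o i) /\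
      (collider_at o i -> exists2 s, s \in S & ancestor E (nth j w i) s).

Definition d_separated (p : nat) (E : {set 'I_p * 'I_p}) (j k : 'I_p)
  (S : {set 'I_p}) : Prop := ~ d_connected E j k S.

Definition admissible (p : nat) (j k : 'I_p) (S : {set 'I_p}) : Prop :=
  j != k /\ j \notin S /\ k \notin S.

Definition Dsep_sub (p : nat) (E1 E2 : {set 'I_p * 'I_p}) : Prop :=
  forall j k S, admissible j k S -> d_separated E1 j k S -> d_separated E2 j k S.

Definition Dsep_strict_sub (p : nat) (E1 E2 : {set 'I_p * 'I_p}) : Prop :=
  Dsep_sub E1 E2 /\ ~ Dsep_sub E2 E1.

(* A distribution of the random vector (X_1,...,X_p) is given by a probability
   space (Omega, P) and measurable real random variables X : 'I_p -> Omega -> R. *)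
Definition random_vector (R : realType) (d : measure_display)
  (Omega : measurableType d) (p : nat) (X : 'I_p -> Omega -> R) : Prop :=
  forall i, measurable_fun setT (X i).

Definition sigma_XS (R : realType) (d : measure_display)
  (Omega : measurableType d) (p : nat) (X : 'I_p -> Omega -> R)
  (S : {set 'I_p}) : set (set Omega) :=
  <<s [set X i @^-1` B | i in [set i | i \in S] & B in [set B : set R | measurable B]] >>.

(* Conditional independence X_j _||_ X_k | X_S:
   for every Borel A, P(X_j \in A | X_k, X_S) has a sigma(X_S)-measurable
   version, i.e. there is a sigma(X_S)-measurable phi with
   P(X_j \in A, X_k \in B, C) = int_{X_k \in B, C} phi dP
   for all Borel B and all C in sigma(X_S). *)
Definition cond_indep (R : realType) (d : measure_display)
  (Omega : measurableType d) (P : probability Omega R) (p : nat)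
  (X : 'I_p -> Omega -> R) (j k : 'I_p) (S : {set 'I_p}) : Prop :=
  forall A : set R, measurable A ->
    exists phi : Omega -> R,
      (forall B : set R, measurable B -> sigma_XS X S (phi @^-1` B)) /\
      forall (B : set R) (C : set Omega), measurable B -> sigma_XS X S C ->
        P (X j @^-1` A `&` X k @^-1` B `&` C) =
        (\int[P]_(x in X k @^-1` B `&` C) (phi x)%:E)%E.

Definition CMC (R : realType) (d : measure_display) (Omega : measurableType d)
  (P : probability Omega R) (p : nat) (X : 'I_p -> Omega -> R)
  (E : {set 'I_p * 'I_p}) : Prop :=
  forall j k S, admissible j k S -> d_separated E j k S -> cond_indep P X j k S.

Definition CFC (R : realType) (d : measure_display) (Omega : measurableType d)
  (P : probability Omega R) (p : nat) (X : 'I_p -> Omega -> R)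
  (E : {set 'I_p * 'I_p}) : Prop :=
  forall j k S, admissible j k S -> (d_separated E j k S <-> cond_indep P X j k S).

Definition markov_equiv (R : realType) (p : nat) (E1 E2 : {set 'I_p * 'I_p})
  : Prop :=
  forall (d : measure_display) (Omega : measurableType d)
    (P : probability Omega R) (X : 'I_p -> Omega -> R),
    random_vector X -> (CMC P X E1 <-> CMC P X E2).

Definition identifiable_SMR (R : realType) (d : measure_display)
  (Omega : measurableType d) (P : probability Omega R) (p : nat)
  (X : 'I_p -> Omega -> R) (E : {set 'I_p * 'I_p}) : Prop :=
  CMC P X E /\
  forall G : {set 'I_p * 'I_p}, is_dcg G -> CMC P X G ->
    ~ markov_equiv R G E -> (skel_card E < skel_card G)%N.

Definition weak_SMR (R : realType) (d : measure_display)
  (Omega : measurableType d) (P : probability Omega R) (p : nat)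
  (X : 'I_p -> Omega -> R) (E : {set 'I_p * 'I_p}) : Prop :=
  CMC P X E /\
  forall G : {set 'I_p * 'I_p}, is_dcg G -> CMC P X G ->
    ~ markov_equiv R G E -> (skel_card E <= skel_card G)%N.

Definition P_minimal (R : realType) (d : measure_display)
  (Omega : measurableType d) (P : probability Omega R) (p : nat)
  (X : 'I_p -> Omega -> R) (E : {set 'I_p * 'I_p}) : Prop :=
  CMC P X E /\
  ~ exists G : {set 'I_p * 'I_p},
      [/\ is_dcg G, CMC P X G, ~ markov_equiv R G E & Dsep_strict_sub E G].

From HB Require Import structures.
From mathcomp Require Import all_boot all_order all_algebra.
From mathcomp Require Import all_classical all_reals all_analysis.
From mathcomp Require Import ring zify.

Set Implicit Arguments.
Unset Strict Implicit.
Unset Printing Implicit Defensive.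
Import Order.TTheory GRing.Theory Num.Theory.

(* Everything rests on two facts about d-separation: adjacent vertices of the
   skeleton are d-connected given every admissible set, and non-adjacent ones
   are d-separated by their proper ancestors.  Hence a distribution faithful to
   G1 and Markov to G2 forces S(G1) to be contained in S(G2), which gives (a);
   and D_sep(G1) contained in D_sep(G2) forces S(G2) to be contained in S(G1),
   which gives (c).

   For (b) and (d) take the cyclic graph 0 <-> 1, 2 -> 1, 3 -> 0 and the DAG
   0 -> 1, {0, 1} -> {2, 3}; both skeletons consist of all pairs but {2, 3}.
   An explicit distribution on eight equally likely outcomes is faithful to
   the cycle and Markov to the DAG, whose d-separations form a proper subset
   of those of the cycle.  A fair bit copied to all four coordinates is Markov
   to the DAG but not to the cycle, so the two graphs are not Markov
   equivalent. *)

Section d_separation.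
Variables (p : nat) (E : {set 'I_p * 'I_p}).
Implicit Types (j k x y : 'I_p) (S : {set 'I_p}).

Definition skel_adjacent j k : bool := really_adjacent E j k || virtually_adjacent E j k.

Lemma mem_skeleton j k : ((j, k) \in skeleton E) = (j < k) && skel_adjacent j k.
Proof. by rewrite inE. Qed.

Definition has_desc_in S x : Prop := exists2 s, s \in S & ancestor E x s.

Lemma has_desc_in_anc S x y : ancestor E x y -> has_desc_in S y -> has_desc_in S x.
Proof. by move=> xy [s sS ys]; exists s => //; exact: connect_trans ys. Qed.

Lemma edge_ancestor x y : (x, y) \in E -> ancestor E x y.
Proof. exact: connect1. Qed.

Lemma ancestor_source x t : (forall y, (y, t) \notin E) -> ancestor E x t = (x == t).
Proof.
move=> no_pa; apply/idP/eqP=> [/connectP [q xq xt]|->]; last exact: connect0.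
case/lastP: q xq xt => [_ -> //|q z]; rewrite rcons_path last_rcons => /andP [_ qz] tz.
by have := no_pa (last x q); rewrite tz => /negP /(_ qz).
Qed.

Lemma d_connected_sym j k S : d_connected E j k S -> d_connected E k j S.
Proof.
move=> [w [os [[sz w0 wN uw edges] interior]]].
move: sz wN edges interior; set N := size os => sz wN edges interior.
have revw i : i <= N -> nth k (rev w) i = nth j w (N - i).
  move=> iN; rewrite (set_nth_default j) ?size_rev ?sz ?ltnS //.
  by rewrite nth_rev ?sz ?ltnS // subSS.
have revo i : i < N -> nth false (rev (map negb os)) i = ~~ nth false os (N - i.+1).
  by move=> iN; rewrite nth_rev size_map // (nth_map false) //; lia.
exists (rev w), (rev (map negb os)).
split; first split; rewrite ?size_rev ?size_map -/N.
- by rewrite sz.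
- by rewrite revw // subn0.
- by rewrite revw // subnn.
- by rewrite rev_uniq.
- move=> i iN; rewrite revo // !revw // ?(ltnW iN) //.
  have -> : N - i = (N - i.+1).+1 by lia.
  by have := edges (N - i.+1) ltac:(lia); case: (nth false os _).
- move=> i i0 iN; rewrite revw ?(ltnW iN) //.
  have c_rev : collider_at (rev (map negb os)) i = collider_at os (N - i).
    rewrite /collider_at !revo ?negbK 1?andbC; try lia.
    have -> : N - i.+1 = (N - i).-1 by lia.
    by rewrite prednK.
  by rewrite c_rev; apply: interior; lia.
Qed.

Section d_connecting_path.
Variables (j k : 'I_p) (S : {set 'I_p}) (w : seq 'I_p) (os : seq bool).
Local Notation W i := (nth j w i).
Local Notation N := (size os).
Hypothesis edges : forall i, i < N ->
  if nth false os i then (W i, W i.+1) \in E else (W i.+1, W i) \in E.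
Hypothesis w0 : W 0 = j.
Hypothesis wN : W N = k.
Hypothesis colliders : forall i, 0 < i -> i < N ->
  collider_at os i -> has_desc_in S (W i).

Lemma forward_ancestor i : i < N -> nth false os i ->
  ancestor E (W i) k \/ has_desc_in S (W i).
Proof.
move Nm : (N - i) => m; elim: m i Nm => [|m IH] i Nm iN osi; first by lia.
have e : ancestor E (W i) (W i.+1) by have := edges iN; rewrite osi => /edge_ancestor.
have [iN'|iN'] := eqVneq i.+1 N; first by left; rewrite -wN -iN'.
have i1N : i.+1 < N by lia.
case c : (collider_at os i.+1).
  by right; apply: has_desc_in_anc e _; exact: colliders.
move: c; rewrite /collider_at /= osi /= => /negbFE osi1.
case: (IH i.+1 ltac:(lia) i1N osi1) => [h|h].
  by left; exact: connect_trans e h.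
by right; exact: has_desc_in_anc e h.
Qed.

Lemma backward_ancestor i : i < N -> ~~ nth false os i ->
  ancestor E (W i.+1) j \/ has_desc_in S (W i.+1).
Proof.
elim: i => [|i IH] iN osi.
  by left; have := edges iN; rewrite (negbTE osi) w0 => /edge_ancestor.
have e : ancestor E (W i.+2) (W i.+1).
  by have := edges iN; rewrite (negbTE osi) => /edge_ancestor.
case osi' : (nth false os i).
  right; apply: has_desc_in_anc e _.
  by apply: colliders => //; rewrite /collider_at /= osi'.
case: (IH (ltnW iN) (negbT osi')) => [h|h].
  by left; exact: connect_trans e h.
by right; exact: has_desc_in_anc e h.
Qed.

Lemma interior_ancestor i : 0 < i -> i < N ->
  [\/ ancestor E (W i) j, ancestor E (W i) k | has_desc_in S (W i)].
Proof.
move=> i0 iN; case osi : (nth false os i).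
  by case: (forward_ancestor iN osi) => h; [apply: Or32 | apply: Or33].
case osi' : (nth false os i.-1).
  by apply: Or33; apply: colliders => //; rewrite /collider_at osi osi'.
have := backward_ancestor (i := i.-1) ltac:(lia) (negbT osi').
by rewrite prednK // => -[h|h]; [apply: Or31 | apply: Or33].
Qed.

End d_connecting_path.

Definition ancestral_set j k : {set 'I_p} :=
  [set v | [&& ancestor E v j || ancestor E v k, v != j & v != k]].

Lemma admissible_ancestral_set j k : j != k -> admissible j k (ancestral_set j k).
Proof. by move=> jk; rewrite /admissible !inE !eqxx !andbF. Qed.

(* Every interior vertex of a d-connecting path lies in the ancestral set, so
   it is a collider; as two consecutive colliders are impossible, the path is
   an edge or j -> l <- k with l an ancestor of j or k. *)
Lemma d_separated_ancestral_set j k : j != k -> ~~ skel_adjacent j k ->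
  d_separated E j k (ancestral_set j k).
Proof.
move=> jk nadj [w [os [[sz w0 wN uw edges] interior]]].
set A := ancestral_set j k; set N := size os in sz wN edges interior.
have inA i : 0 < i -> i < N -> nth j w i \in A.
  move=> i0 iN; have anc : ancestor E (nth j w i) j || ancestor E (nth j w i) k.
    case: (interior_ancestor edges w0 wN (fun i i0 iN => (interior i i0 iN).2) i0 iN).
    - by move=> ->.
    - by move=> ->; rewrite orbT.
    case=> s; rewrite inE => /andP [/orP [sj|sk] _] ws.
      by apply/orP; left; exact: connect_trans ws sj.
    by apply/orP; right; exact: connect_trans ws sk.
  rewrite inE anc -{2}w0 -wN !nth_uniq ?sz //; lia.
have coll i : 0 < i -> i < N -> collider_at os i.
  by move=> i0 iN; apply: (interior i i0 iN).1; exact: inA.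
case: N sz wN edges interior inA coll => [|[|[|N]]] sz wN edges _ inA coll.
- by move: jk; rewrite -w0 -wN eqxx.
- move: nadj; rewrite /skel_adjacent /really_adjacent -w0 -wN.
  by have := edges 0 isT; case: ifP => _ ->; rewrite ?orbT.
- have := coll 1 isT isT; rewrite /collider_at /= => /andP [os0 os1].
  have := edges 0 isT; have := edges 1 isT; rewrite os0 (negbTE os1) w0 wN.
  move=> kw1 jw1; move: nadj; rewrite /skel_adjacent negb_or => /andP [_ /existsP []].
  exists (nth j w 1); rewrite jw1 kw1 /=.
  by have := inA 1 isT isT; rewrite inE => /andP [].
- have := coll 1 isT isT; have := coll 2 isT isT.
  by rewrite /collider_at /= => /andP [-> _] /andP [].
Qed.

Lemma d_separated_sym j k S : d_separated E j k S -> d_separated E k j S.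
Proof. by move=> sep /d_connected_sym. Qed.

Lemma d_connected_dipath x y S q : path (edge E) x q -> last x q = y ->
  uniq (x :: q) -> {in q, forall z, z \notin S} -> d_connected E x y S.
Proof.
move=> /(pathP x) xq qy uq qS; exists (x :: q), (nseq (size q) true).
split; first split; rewrite ?size_nseq //.
- by rewrite -qy -[size q]/((size (x :: q)).-1) nth_last.
- by move=> i iq; rewrite nth_nseq iq; exact: xq.
move=> [|i] // _ iq; rewrite /collider_at /= !nth_nseq iq ltnW //.
have qi : nth x q i \in q by rewrite mem_nth // ltnW.
by split=> // zS; move: (qS _ qi); rewrite zS.
Qed.

Section descendants.
Variable l : 'I_p.

Definition edge_below : rel 'I_p := fun a b => ((a, b) \in E) && ancestor E l b.

Lemma connect_edge_below_ancestor x y : connect edge_below x y -> ancestor E x y.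
Proof. by apply: connect_sub => a b /andP [ab _]; exact: connect1. Qed.

Lemma ancestor_connect_edge_below y : ancestor E l y -> connect edge_below l y.
Proof.
case/connectP => q lq ->; move: (connect0 edge_below l) lq.
suff all_x x : connect edge_below l x -> path (edge E) x q ->
  connect edge_below l (last x q) by exact: all_x.
elim: q x => [|z q IH] x //= lx /andP [xz zq]; apply: IH zq.
have lz : ancestor E l z := connect_trans (connect_edge_below_ancestor lx) (connect1 xz).
by apply: (connect_trans lx); apply: connect1; apply/andP.
Qed.

Lemma d_connected_through_child x y S : (x, l) \in E -> ancestor E l y -> x != y ->
  ~ has_desc_in S l -> d_connected E x y S.
Proof.
move=> xl ly + nS; have /connectP [q xq ->] : connect edge_below x y.
  apply: connect_trans (connect1 _) (ancestor_connect_edge_below ly).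
  by rewrite /edge_below xl; exact: connect0.
case/shortenP: xq => q' xq' uq' _ _; apply: d_connected_dipath uq' _ => //.
  by apply: sub_path xq' => a b /andP [].
move=> z zq'; apply/negP => zS; apply: nS; exists z => //.
by case/splitPr: zq' xq' => q1 q2; rewrite cat_path /= => /and3P [_ /andP [_ ->]].
Qed.

End descendants.

Lemma d_connected_adjacent j k S : is_dcg E -> admissible j k S -> skel_adjacent j k ->
  d_connected E j k S.
Proof.
move=> dcg [jk [jS kS]] /orP [/orP [jk_edge|kj_edge]|/existsP [l /and3P [jl kl lj_or_lk]]].
- apply: (d_connected_dipath (q := [:: k])) => /=; rewrite ?inE ?andbT //.
  by move=> z; rewrite inE => /eqP ->.
- apply: d_connected_sym; apply: (d_connected_dipath (q := [:: j])) => /=.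
  all: rewrite ?inE ?andbT 1?eq_sym //.
  by move=> z; rewrite inE => /eqP ->.
have [[s sS ls]|nS] := pselect (has_desc_in S l).
  have lj : l != j by apply: (contraNneq _ (dcg j)) => lj; rewrite -{2}lj.
  have lk : l != k by apply: (contraNneq _ (dcg k)) => lk; rewrite -{2}lk.
  exists [:: j; l; k], [:: true; false]; split; first split => //.
  - by rewrite /= !inE negb_or eq_sym lj jk lk.
  - by case=> [|[|]].
  by move=> [|[|i]] // _ _; split=> // _; exists s.
case/orP: lj_or_lk => [lj|lk].
  by apply: d_connected_sym; apply: d_connected_through_child kl lj _ nS; rewrite eq_sym.
exact: d_connected_through_child jl lk jk nS.
Qed.

End d_separation.

Lemma skeleton_sub_Dsep p (E G : {set 'I_p * 'I_p}) :
  is_dcg G -> Dsep_sub E G -> skeleton G \subset skeleton E.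
Proof.
move=> dcgG sepEG; apply/fintype.subsetP => -[j k]; rewrite !mem_skeleton => /andP [jk adj].
rewrite jk; apply/negPn/negP => nadj; have jk' : j != k by rewrite neq_ltn jk.
have adm := admissible_ancestral_set E jk'.
exact: sepEG _ _ _ adm (d_separated_ancestral_set jk' nadj) (d_connected_adjacent dcgG adm adj).
Qed.

Lemma d_separated_source p (E : {set 'I_p * 'I_p}) (j k u v : 'I_p) (S : {set 'I_p}) :
  j != k -> (forall x, (x, j) \notin E) -> (forall x, (j, x) \in E -> x = u) ->
  (forall x, (x, u) \in E -> x != j -> x = v) -> u \in S -> v \in S ->
  u != k -> v != k -> d_separated E j k S.
Proof.
move=> jk no_pa child pa_u uS vS uk vk [w [os [[sz w0 wN uw edges] interior]]].
set N := size os in sz wN edges interior.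
have N0 : 0 < N by rewrite lt0n; apply: contra_neq jk => N0; rewrite -w0 -wN N0.
have [w1 os0] : nth j w 1 = u /\ nth false os 0.
  have := edges 0 N0; rewrite w0; case: (nth false os 0) => [/child //|].
  by rewrite (negbTE (no_pa _)).
have N1 : 1 < N.
  by rewrite ltn_neqAle N0 andbT; apply: contra_neq uk => N1; rewrite -w1 -wN -N1.
have [+ _] := interior 1 isT N1; rewrite w1 /collider_at /= => /(_ uS) /andP [_ os1].
have w2 : nth j w 2 = v.
  apply: pa_u; first by have := edges 1 N1; rewrite (negbTE os1) w1.
  by rewrite -{2}w0 nth_uniq ?sz.
have N2 : 2 < N.
  by rewrite ltn_neqAle N1 andbT; apply: contra_neq vk => N2; rewrite -w2 -wN -N2.
have [+ _] := interior 2 isT N2; rewrite w2 /collider_at /= (negbTE os1).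
by move=> /(_ vS).
Qed.

Section example_graphs.

Definition v0 : 'I_4 := @Ordinal 4 0 isT.
Definition v1 : 'I_4 := @Ordinal 4 1 isT.
Definition v2 : 'I_4 := @Ordinal 4 2 isT.
Definition v3 : 'I_4 := @Ordinal 4 3 isT.

Lemma ord4P (P : 'I_4 -> Prop) : P v0 -> P v1 -> P v2 -> P v3 -> forall i, P i.
Proof.
by move=> P0 P1 P2 P3 [[|[|[|[|//]]]] i4];
  [move: P0 | move: P1 | move: P2 | move: P3]; congr (P _); exact: val_inj.
Qed.

Implicit Types (j k : 'I_4) (S : {set 'I_4}).

Definition E_cyc : {set 'I_4 * 'I_4} := [set (v0, v1); (v1, v0); (v2, v1); (v3, v0)].

Definition E_dag : {set 'I_4 * 'I_4} :=
  [set (v0, v1); (v0, v2); (v0, v3); (v1, v2); (v1, v3)].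

Lemma is_dcg_cyc : is_dcg E_cyc.
Proof. by apply: ord4P; rewrite !inE. Qed.

Lemma is_dcg_dag : is_dcg E_dag.
Proof. by apply: ord4P; rewrite !inE. Qed.

Definition pair23 (j k : 'I_4) : bool := (j == v2) && (k == v3) || (j == v3) && (k == v2).

Lemma pair23_sym j k : pair23 j k = pair23 k j.
Proof. by rewrite /pair23 orbC andbC [(j == v2) && _]andbC. Qed.

Lemma adjacent_cyc j k : j != k -> skel_adjacent E_cyc j k = ~~ pair23 j k.
Proof.
have a10 : ancestor E_cyc v1 v0 by apply: connect1; rewrite /edge !inE.
have a01 : ancestor E_cyc v0 v1 by apply: connect1; rewrite /edge !inE.
move: j k; apply: ord4P; apply: ord4P => //= _; rewrite /skel_adjacent /really_adjacent !inE //=.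
all: first [ by apply/existsP; exists v1; rewrite !inE a10 ?orbT
           | by apply/existsP; exists v0; rewrite !inE a01 ?orbT
           | by apply/negbTE/existsP => -[]; apply: ord4P; rewrite !inE ].
Qed.

Lemma adjacent_dag j k : j != k -> skel_adjacent E_dag j k = ~~ pair23 j k.
Proof.
move: j k; apply: ord4P; apply: ord4P => //= _; rewrite /skel_adjacent /really_adjacent !inE //=.
all: by apply/negbTE/existsP => -[]; apply: ord4P; rewrite !inE.
Qed.

Lemma skeleton_dag_cyc : skeleton E_dag = skeleton E_cyc.
Proof.
apply/setP => -[j k]; rewrite !mem_skeleton.
have [->|jk] := eqVneq j k; first by rewrite ltnn.
by rewrite adjacent_cyc ?adjacent_dag.
Qed.

Definition cyc_separates (j k : 'I_4) (S : {set 'I_4}) : bool :=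
  pair23 j k && ((v0 \in S) == (v1 \in S)).

Lemma admissible_pair23_set0 j k S : admissible j k S -> pair23 j k ->
  v0 \notin S -> v1 \notin S -> S = finset.set0.
Proof.
case=> _ [jS kS] /orP [] /andP [/eqP ej /eqP ek] S0 S1; subst j k.
all: by apply/setP; apply: ord4P; rewrite inE ?(negbTE S0) ?(negbTE S1) ?(negbTE jS) ?(negbTE kS).
Qed.

Lemma d_separated_cyc j k S : admissible j k S ->
  d_separated E_cyc j k S <-> cyc_separates j k S.
Proof.
move=> adm; rewrite /cyc_separates; case p23 : (pair23 j k) => /=; last first.
  split=> // sep; exfalso; apply: sep; apply: (d_connected_adjacent is_dcg_cyc adm).
  by rewrite adjacent_cyc ?p23 //; case: adm.
wlog [ej ek] : j k adm p23 / j = v2 /\ k = v3.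
  move=> wlog; case/orP: (p23) => /andP [/eqP ej /eqP ek]; first exact: wlog.
  have adm' : admissible k j S by case: adm => jk [jS kS]; split; rewrite 1?eq_sym.
  have p23' : pair23 k j by rewrite pair23_sym.
  by rewrite -(wlog k j adm' p23' (conj ek ej)); split=> /d_separated_sym.
subst j k.
case S0 : (v0 \in S); case S1 : (v1 \in S); split=> // sep.
- by apply: (@d_separated_source _ E_cyc v2 v3 v1 v0 S) => //; apply: ord4P; rewrite !inE.
- exfalso; apply: sep; exists [:: v2; v1; v0; v3], [:: true; true; false].
  split; first by split=> // -[|[|[|]]] //; rewrite !inE.
  case=> [|[|[|]]] // _ _; rewrite /collider_at /= ?S0 ?S1; split=> // _.
  by exists v0 => //; exact: connect0.
- exfalso; apply: sep; exists [:: v2; v1; v0; v3], [:: true; false; false].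
  split; first by split=> // -[|[|[|]]] //; rewrite !inE.
  case=> [|[|[|]]] // _ _; rewrite /collider_at /= ?S0 ?S1; split=> // _.
  by exists v1 => //; exact: connect0.
- rewrite (admissible_pair23_set0 adm p23 (negbT S0) (negbT S1)).
  have no_pa2 y : (y, v2) \notin E_cyc by move: y; apply: ord4P; rewrite !inE.
  have no_pa3 y : (y, v3) \notin E_cyc by move: y; apply: ord4P; rewrite !inE.
  have -> : finset.set0 = ancestral_set E_cyc v2 v3.
    by apply/setP => x; rewrite !inE !ancestor_source //; case: eqP; case: eqP.
  by apply: d_separated_ancestral_set; rewrite ?adjacent_cyc.
Qed.

Lemma d_connected_dag23 S : v0 \notin S \/ v1 \notin S -> d_connected E_dag v2 v3 S.
Proof.
have via c : (c, v2) \in E_dag -> (c, v3) \in E_dag -> c \notin S -> uniq [:: v2; c; v3] ->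
    d_connected E_dag v2 v3 S.
  move=> c2 c3 cS uc; exists [:: v2; c; v3], [:: false; true].
  split; first by split=> // -[|[|]].
  by case=> [|[|]] // _ _; rewrite /collider_at /= (negbTE cS).
by case=> [S0|S1]; [apply: (via v0) | apply: (via v1)]; rewrite ?inE.
Qed.

Lemma d_separated_dag j k S : admissible j k S -> d_separated E_dag j k S ->
  [&& pair23 j k, v0 \in S & v1 \in S].
Proof.
move=> adm sep; case p23 : (pair23 j k); last first.
  exfalso; apply: sep; apply: (d_connected_adjacent is_dcg_dag adm).
  by rewrite adjacent_dag ?p23 //; case: adm.
have sep23 : d_separated E_dag v2 v3 S.
  by case/orP: p23 sep => /andP [/eqP -> /eqP ->] // /d_separated_sym.
rewrite /=; apply/andP; split; apply/negPn/negP => nS; apply: sep23.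
  by apply: d_connected_dag23; left.
by apply: d_connected_dag23; right.
Qed.

Lemma admissible23_set0 : admissible v2 v3 finset.set0.
Proof. by split; rewrite ?inE. Qed.

Lemma d_separated_cyc23 : d_separated E_cyc v2 v3 finset.set0.
Proof. by apply/(d_separated_cyc admissible23_set0); rewrite /cyc_separates !inE. Qed.

End example_graphs.

(* The rows are X_0, ..., X_3 on eight equally likely outcomes: X_2 and X_3
   are independent fair bits and (X_0, X_1) takes eight distinct values, so it
   determines the outcome.  The values of X_0 and X_1 are chosen so that no
   further conditional independence holds (see dependentb_fP). *)
Definition table_P : seq (seq nat) :=
  [:: [:: 2; 0; 0; 3; 1; 2; 0; 1]; [:: 0; 1; 0; 3; 1; 1; 3; 0];
      [:: 0; 0; 0; 0; 1; 1; 1; 1]; [:: 0; 0; 1; 1; 0; 0; 1; 1]].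

Definition fP (i w : nat) : nat := nth 0 (nth [::] table_P i) (w %% 8).

Definition fQ (i w : nat) : nat := w %% 2.

Lemma fP01_injective w w' : fP 0 w = fP 0 w' -> fP 1 w = fP 1 w' -> w %% 8 = w' %% 8.
Proof.
have inj : all (fun r => all (fun r' =>
    (fP 0 r == fP 0 r') ==> (fP 1 r == fP 1 r') ==> (r == r')) (iota 0 8)) (iota 0 8).
  by [].
have fPmod i x : fP i x = fP i (x %% 8) by rewrite /fP modn_mod.
move=> e0 e1; have /allP /(_ (w %% 8)) := inj; rewrite mem_iota ltn_mod => /(_ isT).
move=> /allP /(_ (w' %% 8)); rewrite mem_iota ltn_mod => /(_ isT).
by rewrite -!fPmod e0 e1 !eqxx => /eqP.
Qed.

Local Open Scope classical_set_scope.
Local Open Scope ring_scope.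

Section sigma_XS.
Context {R : realType} {d : measure_display} {T : measurableType d} {p : nat}.
Variables (X : 'I_p -> T -> R) (S : {set 'I_p}).

Definition XS_eq (w w' : T) : Prop := forall i, i \in S -> X i w = X i w'.

Definition XS_saturated (C : set T) : Prop :=
  forall w w', XS_eq w w' -> C w -> C w'.

Definition XS_class (w0 : T) : set T := [set w | XS_eq w w0].

Lemma sigma_XS_saturated C : sigma_XS X S C -> XS_saturated C.
Proof.
have sat_sigma : sigma_algebra setT XS_saturated.
  split.
  - by move=> w w' _ [].
  - move=> A satA w w' ww' [_ nAw]; split=> // Aw'; apply: nAw.
    by apply: satA Aw' => i /ww' ->.
  - by move=> F satF w w' ww' [n _ Fw]; exists n => //; apply: satF Fw.
apply: smallest_sub sat_sigma _ C => _ [i /= iS [B _ <-]] w w' ww' /=.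
by rewrite -(ww' i iS).
Qed.

Lemma sigma_XS_class w0 : sigma_XS X S (XS_class w0).
Proof.
pose G := [set X i @^-1` B | i in [set i | i \in S] & B in [set B : set R | measurable B]].
have -> : XS_class w0 = \bigcap_(i in [set i | i \in S]) X i @^-1` [set X i w0].
  by apply/seteqP; split=> w /= h i /h.
change (measurable (\bigcap_(i in [set i | i \in S]) X i @^-1` [set X i w0]
          : set (g_sigma_algebraType G))).
apply: fin_bigcap_measurable; first exact: finite_finset.
move=> i iS; apply: sub_sigma_algebra; exists i => //; exists [set X i w0] => //.
exact: measurable_set1.
Qed.

Lemma sigma_XS_preimage_cst (c : R) (B : set R) : sigma_XS X S (cst c @^-1` B).
Proof.
rewrite preimage_cst; case: ifP => _; last exact: sigma_algebra0.
by rewrite -setC0; apply: sigma_algebraC; exact: sigma_algebra0.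
Qed.

End sigma_XS.

(* On a countable sample space a saturated set is a countable union of
   X_S-classes. *)
Lemma sigma_XS_nat (R : realType) (p : nat) (X : 'I_p -> nat -> R) S C :
  XS_saturated X S C -> sigma_XS X S C.
Proof.
pose G := [set X i @^-1` B | i in [set i | i \in S] & B in [set B : set R | measurable B]].
move=> satC; have -> : C = \bigcup_(w0 in C) XS_class X S w0.
  apply/seteqP; split=> [w Cw|w [w0 Cw0 /= ww0]]; first by exists w.
  by apply: satC Cw0 => i /ww0 ->.
change (measurable (\bigcup_(w0 in C) XS_class X S w0 : set (g_sigma_algebraType G))).
by apply: bigcup_measurable => w0 _; exact: sigma_XS_class.
Qed.

Section uniform.
Context (R : realType) (n : nat).

Definition unif_weight : {nonneg R} :=
  @NngNum _ (n.+1)%:R^-1 (ltac:(by rewrite invr_ge0)).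

Definition unif : set nat -> \bar R :=
  mscale unif_weight (msum (fun k => @dirac _ nat k R) n.+1).

HB.instance Definition _ :=
  Measure.copy unif (mscale unif_weight (msum (fun k => @dirac _ nat k R) n.+1)).

Lemma unifE A : unif A = ((n.+1)%:R^-1 * \sum_(k < n.+1) ((k : nat) \in A)%:R)%:E.
Proof.
rewrite /unif /mscale /msum /= EFinM; congr (_ * _)%E.
by rewrite -sumEFin; apply: eq_bigr => k _; exact: diracE.
Qed.

Lemma unif_setT : unif setT = 1%E.
Proof.
rewrite unifE (eq_bigr (fun _ => 1)) => [|k _]; last by rewrite mem_set.
by rewrite sumr_const card_ord mulVf.
Qed.

HB.instance Definition _ := @Measure_isProbability.Build _ _ R unif unif_setT.

Definition unif_count (q : pred nat) : nat := count q (iota 0 n.+1).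

Lemma unif_countE (A : set nat) (q : pred nat) : (forall w, A w <-> q w) ->
  unif A = ((n.+1)%:R^-1 * (unif_count q)%:R)%:E.
Proof.
move=> Aq; rewrite unifE; congr (_ * _)%:E.
rewrite (eq_bigr (fun k : 'I_n.+1 => (q k : nat)%:R)) => [|k _]; last first.
  by have -> : ((k : nat) \in A) = q k by apply/idP/idP => [/set_mem/Aq|/Aq/mem_set].
rewrite -natr_sum -(big_mkord xpredT (fun k => (q k : nat))) /unif_count.
by rewrite -sumn_count sumnE big_map /index_iota subn0.
Qed.

End uniform.

Section cond_indep_criteria.
Context (R : realType) (p : nat).
Implicit Types (j k : 'I_p) (S : {set 'I_p}).

Lemma cond_indep_determined (P : probability nat R) (X : 'I_p -> nat -> R) j k S :
  (forall w w', XS_eq X S w w' -> X j w = X j w') -> cond_indep P X j k S.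
Proof.
move=> detj A mA; exists (\1_(X j @^-1` A)); split=> [B _|B C mB _].
  apply: sigma_XS_nat => w w' /detj ww' /=.
  rewrite /indic /=; have -> // : (w \in X j @^-1` A) = (w' \in X j @^-1` A).
  by apply/idP/idP => /set_mem Aw; apply/mem_set; move: Aw; rewrite /preimage /= ww'.
by rewrite integral_indic // setIA.
Qed.

Lemma cond_indep_set0 (d : measure_display) (T : measurableType d)
    (P : probability T R) (X : 'I_p -> T -> R) j k : random_vector X ->
  (forall A B, measurable A -> measurable B ->
     P (X j @^-1` A `&` X k @^-1` B) = (P (X j @^-1` A) * P (X k @^-1` B))%E) ->
  cond_indep P X j k finset.set0.
Proof.
move=> rvX indep A mA; exists (fun=> fine (P (X j @^-1` A))).
split=> [B _|B C mB /sigma_XS_saturated satC]; first exact: sigma_XS_preimage_cst.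
have [->|/set0P [w Cw]] := eqVneq C set0.
  by rewrite !setI0 measure0 integral_set0.
have -> : C = setT.
  by apply/seteqP; split=> // w' _; apply: satC Cw => i; rewrite inE.
have mX i (D : set R) : measurable D -> measurable (X i @^-1` D).
  by move=> mD; rewrite -[_ @^-1` _]setTI; exact: rvX.
rewrite !setIT indep // integral_cst; last exact: mX.
by rewrite fineK // fin_num_measure //; exact: mX.
Qed.

End cond_indep_criteria.

Section nat_valued_model.
Context (R : realType) (n p : nat) (f : nat -> nat -> nat).

Definition natX : 'I_p -> nat -> R := fun i w => (f i w)%:R.

Lemma random_vector_natX : random_vector natX.
Proof. by []. Qed.

Definition classb (m : pred nat) (w0 w : nat) : bool :=
  all (fun i => m i ==> (f i w == f i w0)) (iota 0 p).

Definition class_count (m : pred nat) (w0 : nat) (q : pred nat) : nat :=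
  unif_count n (fun w => q w && classb m w0 w).

Definition dependentb (vals : seq nat) (m : pred nat) (j k : 'I_p) : bool :=
  has (fun w0 => has (fun a => has (fun b =>
    (class_count m w0 (fun w => (f j w == a) && (f k w == b)) * class_count m w0 xpredT
     != class_count m w0 (fun w => f j w == a) * class_count m w0 (fun w => f k w == b))%N)
    vals) vals) (iota 0 n.+1).

Section fixed_S.
Variables (S : {set 'I_p}) (m : pred nat).
Hypothesis mS : forall i : 'I_p, (i \in S) = m i.

Lemma XS_class_natX w0 w : XS_class natX S w0 w <-> classb m w0 w.
Proof.
split=> [ww0|/allP ww0 i iS].
  apply/allP => i; rewrite mem_iota add0n => ip; apply/implyP => mi.
  by have := ww0 (Ordinal ip); rewrite mS => /(_ mi) /eqP; rewrite eqr_nat.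
apply/eqP; rewrite eqr_nat.
have ip : (i : nat) \in iota 0 p by rewrite mem_iota add0n ltn_ord.
by have /implyP := ww0 i ip; rewrite -mS; apply.
Qed.

(* A sigma(X_S)-measurable version phi of P(X_j = a | X_k, X_S) is constant on
   the X_S-class of w0; integrating it over this class with and without the
   constraint X_k = b gives two proportionalities between the class counts,
   which together contradict the hypothesis. *)
Lemma not_cond_indep_count (j k : 'I_p) w0 a b :
  (class_count m w0 (fun w => (f j w == a) && (f k w == b)) * class_count m w0 xpredT
   != class_count m w0 (fun w => f j w == a) * class_count m w0 (fun w => f k w == b))%N ->
  ~ cond_indep (unif R n) natX j k S.
Proof.
move=> count_neq ci.
have [phi [phi_meas phi_int]] := ci [set a%:R] (measurable_set1 _).
pose C := XS_class natX S w0.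
have phi_cst w : C w -> phi w = phi w0.
  have sat := sigma_XS_saturated (phi_meas [set phi w0] (measurable_set1 _)).
  by move=> ww0; apply: (sat w0 w) => // i iS; rewrite ww0.
have phi_prop B : measurable B ->
    unif R n (natX j @^-1` [set a%:R] `&` natX k @^-1` B `&` C) =
    ((phi w0)%:E * unif R n (natX k @^-1` B `&` C))%E.
  move=> mB; rewrite phi_int //; last exact: sigma_XS_class.
  rewrite (eq_integral (fun=> (phi w0)%:E)) => [|w /set_mem [_ Cw]]; last by rewrite phi_cst.
  by rewrite integral_cst.
have natXE i c w : natX i w = c%:R <-> f i w == c.
  by rewrite /natX; split=> [/eqP|/eqP ->]; rewrite ?eqr_nat.
have := phi_prop [set b%:R] (measurable_set1 _).
rewrite (@unif_countE _ _ _ (fun w => ((f j w == a) && (f k w == b)) && classb m w0 w)); last first.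
  move=> w; rewrite /= /C XS_class_natX !natXE.
  by split=> [[[-> ->] ->]|/andP [/andP [-> ->] ->]].
rewrite (@unif_countE _ _ _ (fun w => (f k w == b) && classb m w0 w)); last first.
  by move=> w; rewrite /= /C XS_class_natX natXE; split=> [[-> ->]|/andP [-> ->]].
have := phi_prop setT measurableT.
rewrite (@unif_countE _ _ _ (fun w => (f j w == a) && classb m w0 w)); last first.
  by move=> w; rewrite /= /C XS_class_natX natXE; split=> [[[-> _] ->]|/andP [-> ->]].
rewrite (@unif_countE _ _ _ (fun w => xpredT w && classb m w0 w)); last first.
  by move=> w; rewrite /= /C XS_class_natX; split=> [[_ ->]|->].
move=> [e2] [e1]; apply: (negP count_neq); rewrite -(eqr_nat R) !natrM.
have n1_neq0 : (n.+1)%:R^-1 != 0 :> R by rewrite invr_eq0 pnatr_eq0.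
move: e1 e2; rewrite /class_count !(mulrCA (phi w0)).
move=> /(mulfI n1_neq0) -> /(mulfI n1_neq0) ->.
by rewrite mulrAC mulrC.
Qed.

Lemma not_cond_indep_dependentb vals (j k : 'I_p) :
  dependentb vals m j k -> ~ cond_indep (unif R n) natX j k S.
Proof. by case/hasP => w0 _ /hasP [a _ /hasP [b _]]; exact: not_cond_indep_count. Qed.

End fixed_S.
End nat_valued_model.

Section skeleton_bounds.
Context (R : realType) (d : measure_display) (T : measurableType d).
Variables (P : probability T R) (p : nat) (X : 'I_p -> T -> R).

Definition skeleton_dependent (E : {set 'I_p * 'I_p}) : Prop :=
  forall j k S, (j, k) \in skeleton E -> admissible j k S -> ~ cond_indep P X j k S.

Lemma CMC_of_CFC E : CFC P X E -> CMC P X E.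
Proof. by move=> cfc j k S adm; case: (cfc j k S adm). Qed.

Lemma skeleton_dependent_of_CFC E : is_dcg E -> CFC P X E -> skeleton_dependent E.
Proof.
move=> dcgE cfc j k S; rewrite mem_skeleton => /andP [_ adj] adm /(cfc j k S adm).2.
by apply; exact: d_connected_adjacent.
Qed.

Lemma skeleton_sub_CMC E G : CMC P X G -> skeleton_dependent E ->
  skeleton E \subset skeleton G.
Proof.
move=> cmcG depE; apply/fintype.subsetP => -[j k] jkE.
move: (jkE); rewrite !mem_skeleton => /andP [jk _]; rewrite jk; apply/negPn/negP => nadj.
have jk' : j != k by rewrite neq_ltn jk.
have adm := admissible_ancestral_set G jk'.
exact: depE _ _ _ jkE adm (cmcG _ _ _ adm (d_separated_ancestral_set jk' nadj)).
Qed.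

Lemma weak_SMR_of_skeleton_dependent E : CMC P X E -> skeleton_dependent E ->
  weak_SMR P X E.
Proof.
move=> cmcE depE; split=> // G _ cmcG _.
exact/subset_leq_card/skeleton_sub_CMC.
Qed.

Lemma weak_SMR_of_CFC E : is_dcg E -> CFC P X E -> weak_SMR P X E.
Proof.
move=> dcgE cfc; apply: weak_SMR_of_skeleton_dependent; first exact: CMC_of_CFC.
exact: skeleton_dependent_of_CFC.
Qed.

Lemma P_minimal_of_identifiable_SMR E : identifiable_SMR P X E -> P_minimal P X E.
Proof.
move=> [cmcE smr]; split=> // -[G [dcgG cmcG neqGE [sepEG _]]].
have := smr G dcgG cmcG neqGE.
by rewrite ltnNge (subset_leq_card (skeleton_sub_Dsep dcgG sepEG)).
Qed.

Lemma not_markov_equiv_of_CMC E G : random_vector X -> CMC P X E -> ~ CMC P X G ->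
  ~ markov_equiv R E G /\ ~ markov_equiv R G E.
Proof. by move=> rvX cmcE ncmcG; split=> /(_ d T P X rvX) eqv; apply: ncmcG; apply/eqv. Qed.

End skeleton_bounds.

Section models.
Variable R : realType.
Implicit Types (j k : 'I_4) (S : {set 'I_4}).

Local Notation P := (unif R 7).
Local Notation XP := (@natX R 4 fP).
Local Notation Q := (unif R 1).
Local Notation XQ := (@natX R 4 fQ).

Definition sbits S : pred nat := nth false [:: v0 \in S; v1 \in S; v2 \in S; v3 \in S].

Lemma sbitsE S (i : 'I_4) : (i \in S) = sbits S i.
Proof. by move: i; apply: ord4P. Qed.

Lemma dependentb_fP j k (s0 s1 s2 s3 : bool) :
  let m := nth false [:: s0; s1; s2; s3] in
  j != k -> ~~ m j -> ~~ m k -> ~~ (pair23 j k && (s0 == s1)) ->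
  dependentb 7 fP (iota 0 4) m j k.
Proof.
by move: j k; apply: ord4P; apply: ord4P; case: s0; case: s1; case: s2; case: s3; vm_compute.
Qed.

Lemma not_cond_indep_P j k S : admissible j k S -> ~~ cyc_separates j k S ->
  ~ cond_indep P XP j k S.
Proof.
move=> [jk [jS kS]] nsep; apply: (not_cond_indep_dependentb (m := sbits S) (sbitsE S)).
by rewrite !sbitsE in jS kS; exact: dependentb_fP.
Qed.

Lemma cond_indep_P j k S : admissible j k S -> cyc_separates j k S -> cond_indep P XP j k S.
Proof.
move=> adm /andP [p23 /eqP S01]; case S0 : (v0 \in S).
  apply: cond_indep_determined => w w' ww'.
  have S1 : v1 \in S by rewrite -S01.
  have /eqP := ww' v0 S0; have /eqP := ww' v1 S1.
  by rewrite /natX !eqr_nat /fP => /eqP e1 /eqP e0; rewrite (fP01_injective e0 e1).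
rewrite (admissible_pair23_set0 adm p23 (negbT S0)) -?S01 ?S0 //.
apply: cond_indep_set0 => // A B _ _.
have memX i D w : (w \in XP i @^-1` D) = ((fP i w)%:R \in D)%R.
  by apply/idP/idP => /set_mem ?; apply/mem_set.
rewrite /= !unifE -EFinM; congr (_%:E).
rewrite !big_ord_recr !big_ord0 /= !in_setI !memX.
by case/orP: p23 => /andP [/eqP -> /eqP ->]; rewrite /fP /= -!mulnb !natrM; field.
Qed.

Lemma cond_indep_P_iff j k S : admissible j k S -> cond_indep P XP j k S <-> cyc_separates j k S.
Proof.
move=> adm; split=> [ci|]; last exact: cond_indep_P.
by apply/negPn/negP => nsep; exact: not_cond_indep_P adm nsep ci.
Qed.

Lemma CFC_P_cyc : CFC P XP E_cyc.
Proof.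
move=> j k S adm.
exact: iff_trans (d_separated_cyc adm) (iff_sym (cond_indep_P_iff adm)).
Qed.

Lemma CMC_P_dag : CMC P XP E_dag.
Proof.
move=> j k S adm /(d_separated_dag adm) /and3P [p23 S0 S1].
by apply: cond_indep_P adm _; rewrite /cyc_separates p23 S0 S1.
Qed.

Lemma skeleton_dependent_P_dag : skeleton_dependent P XP E_dag.
Proof.
move=> j k S; rewrite mem_skeleton => /andP [_ adj] adm; apply: (not_cond_indep_P adm).
by move: adj; rewrite adjacent_dag /cyc_separates; [case: pair23 | case: adm].
Qed.

Lemma Dsep_strict_sub_dag_cyc : Dsep_strict_sub E_dag E_cyc.
Proof.
split=> [j k S adm /(d_separated_dag adm) /and3P [p23 S0 S1]|sub].
  by apply/(d_separated_cyc adm); rewrite /cyc_separates p23 S0 S1.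
have := d_separated_dag admissible23_set0 (sub _ _ _ admissible23_set0 d_separated_cyc23).
by rewrite inE andbF.
Qed.

Lemma CMC_Q_dag : CMC Q XQ E_dag.
Proof.
move=> j k S adm /(d_separated_dag adm) /and3P [_ S0 _].
by apply: cond_indep_determined => w w' /(_ v0 S0).
Qed.

Lemma not_CMC_Q_cyc : ~ CMC Q XQ E_cyc.
Proof.
move=> /(_ _ _ _ admissible23_set0 d_separated_cyc23).
apply: (@not_cond_indep_dependentb R 1 4 fQ _ pred0 _ (iota 0 2)) => [i|].
  by rewrite inE.
by vm_compute.
Qed.

Lemma not_markov_equiv_dag_cyc :
  ~ markov_equiv R E_dag E_cyc /\ ~ markov_equiv R E_cyc E_dag.
Proof.
by apply: (not_markov_equiv_of_CMC _ CMC_Q_dag not_CMC_Q_cyc); exact: random_vector_natX.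
Qed.

End models.

Theorem theorem3 (R : realType) :
  (* (a) CFC implies weak SMR *)
  (forall (p : nat) (E : {set 'I_p * 'I_p}) (d : measure_display)
     (Omega : measurableType d) (P : probability Omega R)
     (X : 'I_p -> Omega -> R),
     is_dcg E -> random_vector X -> CFC P X E -> weak_SMR P X E) /\
  (* (b) CFC does not imply identifiable SMR *)
  (exists (p : nat) (E : {set 'I_p * 'I_p}) (d : measure_display)
     (Omega : measurableType d) (P : probability Omega R)
     (X : 'I_p -> Omega -> R),
     [/\ is_dcg E, random_vector X, CFC P X E & ~ identifiable_SMR P X E]) /\
  (* (c) identifiable SMR implies P-minimality *)
  (forall (p : nat) (E : {set 'I_p * 'I_p}) (d : measure_display)
     (Omega : measurableType d) (P : probability Omega R)
     (X : 'I_p -> Omega -> R),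
     is_dcg E -> random_vector X -> identifiable_SMR P X E -> P_minimal P X E) /\
  (* (d) weak SMR does not imply P-minimality *)
  (exists (p : nat) (E : {set 'I_p * 'I_p}) (d : measure_display)
     (Omega : measurableType d) (P : probability Omega R)
     (X : 'I_p -> Omega -> R),
     [/\ is_dcg E, random_vector X, weak_SMR P X E & ~ P_minimal P X E]).
Proof.
have rvP := @random_vector_natX R 4 fP.
have [neq_dag_cyc neq_cyc_dag] := @not_markov_equiv_dag_cyc R.
split; [|split; [|split]].
- by move=> p E d Omega P X dcgE _; exact: weak_SMR_of_CFC.
- exists 4%N, E_cyc, _, nat, (unif R 7), (natX R fP); split=> //.
  + exact: is_dcg_cyc.
  + exact: CFC_P_cyc.
  case=> _ /(_ E_dag is_dcg_dag (@CMC_P_dag R) neq_dag_cyc).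
  by rewrite /skel_card skeleton_dag_cyc ltnn.
- by move=> p E d Omega P X _ _; exact: P_minimal_of_identifiable_SMR.
- exists 4%N, E_dag, _, nat, (unif R 7), (natX R fP); split=> //.
  + exact: is_dcg_dag.
  + exact: weak_SMR_of_skeleton_dependent (@CMC_P_dag R) (@skeleton_dependent_P_dag R).
  case=> _; apply; exists E_cyc; split.
  + exact: is_dcg_cyc.
  + exact/CMC_of_CFC/(@CFC_P_cyc R).
  + exact: neq_cyc_dag.
  + exact: Dsep_strict_sub_dag_cyc.
Qed.
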